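(* Fix a positive integer $d_m$. For $n$ and $k$ with $k\ge\ell(d_m)$ and $n\ge k+\ell(d_m)+2d_m$, let $n'=n-k-\ell(d_m)-2d_m$ and let $\mathcal C_2(n,k,1,d_m)=\{0^k\vec u1^{d_m}\vec c1^{d_m}:\vec c\in A_2(n',k,d_m)\}$. Then $$\min_{k}\ \mathrm{red}(\mathcal C_2(n,k,1,d_m))=\log_2 n+(d_m-1)\log_2\log_2 n+\Theta(1),$$ and the minimum is attained by values of $k$ of the form $k=\log_2 n+(d_m-1)\log_2\log_2 n+\Theta(1)$.
   Context: Binary alphabet. A vector of length $m$ is a $(d,k)$-WWL vector if $m<k$ or every window of $k$ consecutive entries has Hamming weight at least $d$; $A_2(m,k,d)$ is the set of binary $(d,k)$-WWL vectors of length $m$. $\ell(d)=d\lceil\log_2 d\rceil+d$ and $\vec u=1^d\vec u_0\cdots\vec u_{\lceil\log_2 d\rceil-1}\in\{0,1\}^{\ell(d)}$, where $\vec u_i$ is the length-$d$ prefix of $(1^{2^i}0^{2^i})^d$; here $d=d_m$. For $A\subseteq\{0,1\}^n$, $\mathrm{red}(A)=n-\log_2|A|$. *)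

From Stdlib Require Import Reals Lra Lia Arith List Bool.
Import ListNotations.
Open Scope R_scope.

Definition log2R (x : R) : R := ln x / ln 2.

Definition weight (v : list bool) : nat := count_occ Bool.bool_dec v true.

Definition window (i k : nat) (v : list bool) : list bool :=
  firstn k (skipn i v).

Definition wwlb (d k : nat) (v : list bool) : bool :=
  (length v <? k)%nat ||
  forallb (fun i => (d <=? weight (window i k v))%nat)
          (seq 0 (S (length v - k))).

Fixpoint all_vectors (m : nat) : list (list bool) :=
  match m with
  | O => [[]]
  | S m' => map (cons false) (all_vectors m') ++ map (cons true) (all_vectors m')
  end.

Definition A2 (m k d : nat) : list (list bool) := filter (wwlb d k) (all_vectors m).

Definition ell (d : nat) : nat := (d * Nat.log2_up d + d)%nat.

Definition u_i (d i : nat) : list bool :=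
  firstn d (concat (repeat (repeat true (2 ^ i) ++ repeat false (2 ^ i)) d)).

(* u = 1^d u_0 ... u_{ceil(log2 d) - 1}, of length ell(d) *)
Definition uvec (d : nat) : list bool :=
  repeat true d ++ concat (map (u_i d) (seq 0 (Nat.log2_up d))).

Definition C2 (n k d : nat) : list (list bool) :=
  let n' := (n - k - ell d - 2 * d)%nat in
  map (fun c => repeat false k ++ uvec d ++ repeat true d ++ c ++ repeat true d)
      (A2 n' k d).

Definition card_set (l : list (list bool)) : nat :=
  length (nodup (list_eq_dec Bool.bool_dec) l).

Definition redC (n k d : nat) : R := INR n - log2R (INR (card_set (C2 n k d))).

Definition admissible (n k d : nat) : Prop :=
  (ell d <= k)%nat /\ (k + ell d + 2 * d <= n)%nat.

Definition is_minimizer (n k d : nat) : Prop :=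
  admissible n k d /\ forall k', admissible n k' d -> redC n k d <= redC n k' d.

Definition main_term (n d : nat) : R :=
  log2R (INR n) + (INR d - 1) * log2R (log2R (INR n)).

(* The redundancy of C_2(n,k,1,d) is k + ell(d) + 2d plus the deficit m - log2 |A(m)| of the
   WWL vectors of length m = n - k - ell(d) - 2d.  Dropping the first bit of a WWL vector gives
   2 |A(m)| = |A(m+1)| + B(m+1), where B counts the vectors whose tail is WWL but whose first
   window is light.  B(m+1) is at most (number of light windows) |A(m+1-k)|, with at most
   (k+1)^(d-1) light windows, and at least (number of blocking prefixes) |A(m+1-k-d)|, with at
   least (k/2d)^(d-1) such prefixes.  So the deficit is O(m k^(d-1) / 2^k) and
   Omega((m - 3k) k^(d-1) / 2^(k+d)).  Taking 2^k just above n (log2 n)^(d-1), i.e.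
   k = log2 n + (d-1) log2 log2 n + O(1), keeps the deficit bounded, whereas each unit by which k
   falls short of that value doubles it; hence every minimizer k and the minimal redundancy lie
   within O(1) of the main term. *)

From Stdlib Require Import Reals Lra Lia List Bool ZArith.
Import ListNotations.

Open Scope nat_scope.

Definition count_vec (m : nat) (P : list bool -> bool) : nat :=
  length (filter P (all_vectors m)).

Lemma count_vec_0 P : count_vec 0 P = if P [] then 1 else 0.
Proof. unfold count_vec; simpl. destruct (P []); reflexivity. Qed.

Lemma count_vec_S m P :
  count_vec (S m) P = count_vec m (fun w => P (false :: w)) + count_vec m (fun w => P (true :: w)).
Proof.
  unfold count_vec; simpl. rewrite filter_app, length_app, !filter_map_swap, !length_map.
  reflexivity.
Qed.

Lemma count_vec_ext m P Q :
  (forall v, length v = m -> P v = Q v) -> count_vec m P = count_vec m Q.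
Proof.
  revert P Q; induction m as [|m IH]; intros P Q H.
  - rewrite !count_vec_0, H; auto.
  - rewrite !count_vec_S. f_equal; apply IH; intros; apply H; simpl; auto.
Qed.

Lemma count_vec_le m P Q :
  (forall v, length v = m -> P v = true -> Q v = true) -> count_vec m P <= count_vec m Q.
Proof.
  revert P Q; induction m as [|m IH]; intros P Q H.
  - rewrite !count_vec_0. specialize (H [] eq_refl).
    destruct (P []), (Q []); auto; discriminate H; auto.
  - rewrite !count_vec_S. apply Nat.add_le_mono; apply IH; intros; apply H; simpl; auto.
Qed.

Lemma count_vec_split m P Q :
  count_vec m P = count_vec m (fun v => P v && Q v) + count_vec m (fun v => P v && negb (Q v)).
Proof.
  revert P Q; induction m as [|m IH]; intros P Q.
  - rewrite !count_vec_0. destruct (P []), (Q []); auto.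
  - rewrite !count_vec_S, (IH (fun w => P (false :: w)) (fun w => Q (false :: w))),
      (IH (fun w => P (true :: w)) (fun w => Q (true :: w))).
    lia.
Qed.

Lemma count_vec_true m : count_vec m (fun _ => true) = 2 ^ m.
Proof. induction m as [|m IH]; [reflexivity|]. rewrite count_vec_S, IH. simpl. lia. Qed.

Lemma count_vec_false m : count_vec m (fun _ => false) = 0.
Proof. induction m as [|m IH]; [reflexivity|]. rewrite count_vec_S, IH. reflexivity. Qed.

Lemma count_vec_le_pow m P : count_vec m P <= 2 ^ m.
Proof. rewrite <- count_vec_true. apply count_vec_le; auto. Qed.

Lemma count_vec_app a b P Q :
  count_vec (a + b) (fun v => P (firstn a v) && Q (skipn a v)) = count_vec a P * count_vec b Q.
Proof.
  revert P; induction a as [|a IH]; intros P.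
  - simpl. rewrite count_vec_0. destruct (P []); simpl.
    + rewrite Nat.add_0_r. apply count_vec_ext; auto.
    + rewrite <- (count_vec_false b). apply count_vec_ext; auto.
  - simpl plus. rewrite !count_vec_S. simpl.
    rewrite (IH (fun w => P (false :: w))), (IH (fun w => P (true :: w))). lia.
Qed.

Lemma all_vectors_complete v : In v (all_vectors (length v)).
Proof.
  induction v as [|b v IH]; simpl; auto.
  apply in_or_app. destruct b; [right|left]; apply in_map; auto.
Qed.

Lemma count_vec_pos m P v : length v = m -> P v = true -> 1 <= count_vec m P.
Proof.
  intros <- H. unfold count_vec.
  assert (Hv : In v (filter P (all_vectors (length v)))).
  { apply filter_In; split; auto using all_vectors_complete. }
  destruct (filter P _); simpl in *; [contradiction|lia].
Qed.

Lemma NoDup_all_vectors m : NoDup (all_vectors m).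
Proof.
  induction m as [|m IH]; simpl; [repeat constructor; auto|].
  apply NoDup_app.
  - apply NoDup_map_NoDup_ForallPairs; auto. intros x y _ _ H; injection H; auto.
  - apply NoDup_map_NoDup_ForallPairs; auto. intros x y _ _ H; injection H; auto.
  - intros v H1 H2. apply in_map_iff in H1, H2.
    destruct H1 as [x [<- _]], H2 as [y [H _]]. discriminate.
Qed.

Definition bit (u : list bool) (j : nat) : nat := if nth j u false then 1 else 0.

Fixpoint segsum (f : nat -> nat) (i len : nat) : nat :=
  match len with O => O | S len' => f i + segsum f (S i) len' end.

Lemma segsum_add f i a b : segsum f i (a + b) = segsum f i a + segsum f (i + a) b.
Proof.
  revert i; induction a as [|a IH]; intros i; simpl; [rewrite Nat.add_0_r; auto|].
  rewrite IH. replace (S i + a) with (i + S a) by lia. lia.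
Qed.

Lemma segsum_ext f g i a :
  (forall j, i <= j < i + a -> f j = g j) -> segsum f i a = segsum g i a.
Proof.
  revert i; induction a as [|a IH]; intros i H; simpl; auto.
  rewrite (H i), (IH (S i)); auto; [intros; apply H|]; lia.
Qed.

Lemma segsum_shift f c i a : segsum f (c + i) a = segsum (fun j => f (c + j)) i a.
Proof.
  revert i; induction a as [|a IH]; intros i; simpl; auto.
  rewrite <- IH. do 2 f_equal. lia.
Qed.

Lemma segsum_const c i a : segsum (fun _ => c) i a = a * c.
Proof. revert i; induction a as [|a IH]; intros i; simpl; [reflexivity|rewrite IH; lia]. Qed.

Lemma segsum_bit_le u i a : segsum (bit u) i a <= a.
Proof.
  revert i; induction a as [|a IH]; intros i; simpl; auto.
  specialize (IH (S i)). unfold bit at 1. destruct (nth i u false); lia.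
Qed.

Lemma segsum_skipn c u i a : segsum (bit (skipn c u)) i a = segsum (bit u) (c + i) a.
Proof.
  rewrite segsum_shift. apply segsum_ext; intros. unfold bit. rewrite nth_skipn. reflexivity.
Qed.

Lemma segsum_firstn m u i a :
  i + a <= m -> segsum (bit (firstn m u)) i a = segsum (bit u) i a.
Proof.
  intros H; apply segsum_ext; intros j Hj. unfold bit. rewrite nth_firstn.
  destruct (Nat.ltb_spec j m); auto; lia.
Qed.

Lemma weight_cons b w : weight (b :: w) = (if b then 1 else 0) + weight w.
Proof. unfold weight; destruct b; reflexivity. Qed.

Lemma weight_app x y : weight (x ++ y) = weight x + weight y.
Proof. apply count_occ_app. Qed.

Lemma weight_le_length l : weight l <= length l.
Proof. apply count_occ_bound. Qed.

Lemma weight_firstn a u : weight (firstn a u) = segsum (bit u) 0 a.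
Proof.
  revert a; induction u as [|b u IH]; intros a.
  - rewrite firstn_nil. transitivity (segsum (fun _ => 0) 0 a).
    { rewrite segsum_const, Nat.mul_0_r. reflexivity. }
    apply segsum_ext; intros j _. unfold bit. destruct j; reflexivity.
  - destruct a as [|a]; simpl; auto. rewrite weight_cons, IH.
    change (segsum (bit (b :: u)) 1 a) with (segsum (bit (b :: u)) (1 + 0) a).
    rewrite segsum_shift. reflexivity.
Qed.

Lemma weight_window i a u : weight (window i a u) = segsum (bit u) i a.
Proof.
  unfold window. rewrite weight_firstn, segsum_skipn, Nat.add_0_r. reflexivity.
Qed.

Lemma weight_segsum u : weight u = segsum (bit u) 0 (length u).
Proof. rewrite <- weight_firstn, firstn_all. reflexivity. Qed.

Definition isum (f : nat -> nat) (i e : nat) : nat := segsum f i (e - i).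

Lemma segsum_isum f i a : segsum f i a = isum f i (i + a).
Proof. unfold isum. f_equal. lia. Qed.

Lemma isum_split f i m e : i <= m <= e -> isum f i e = isum f i m + isum f m e.
Proof.
  intros H. unfold isum. replace (e - i) with (m - i + (e - m)) by lia.
  rewrite segsum_add. do 2 f_equal; lia.
Qed.

Lemma isum_bit_le u i e : isum (bit u) i e <= e - i.
Proof. apply segsum_bit_le. Qed.

Lemma segsum_cons b u i a : segsum (bit (b :: u)) (S i) a = segsum (bit u) i a.
Proof. exact (eq_sym (segsum_skipn 1 (b :: u) i a)). Qed.

Definition wwl (d k : nat) (u : list bool) : Prop :=
  forall i, i + k <= length u -> d <= segsum (bit u) i k.

Lemma wwlbP d k u : wwlb d k u = true <-> wwl d k u.
Proof.
  unfold wwlb, wwl. rewrite orb_true_iff, Nat.ltb_lt, forallb_forall. split.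
  - intros [H|H] i Hi; [lia|]. rewrite <- weight_window. apply Nat.leb_le, H, in_seq. lia.
  - intros H. destruct (Nat.lt_ge_cases (length u) k) as [Hl|Hl]; [left; auto|right].
    intros i Hi. apply in_seq in Hi. apply Nat.leb_le. rewrite weight_window. apply H. lia.
Qed.

Lemma wwl_short d k u : length u < k -> wwl d k u.
Proof. intros H i Hi. lia. Qed.

Lemma wwl_skipn d k j u : wwl d k u -> wwl d k (skipn j u).
Proof.
  intros H i Hi. rewrite length_skipn in Hi. rewrite segsum_skipn.
  destruct (Nat.le_gt_cases j (length u)).
  - apply H. lia.
  - assert (i = 0 /\ k = 0) as [-> ->] by lia. apply (H 0). lia.
Qed.

Lemma wwl_tl d k b u : wwl d k (b :: u) -> wwl d k u.
Proof. exact (wwl_skipn d k 1 (b :: u)). Qed.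

Lemma wwl_cons d k b u : k <= S (length u) ->
  wwl d k (b :: u) <-> d <= segsum (bit (b :: u)) 0 k /\ wwl d k u.
Proof.
  intros Hk; split.
  - intros H; split; [apply H; simpl; lia|eapply wwl_tl; eauto].
  - intros [H0 H] [|i] Hi; auto. rewrite segsum_cons. apply H. simpl in Hi; lia.
Qed.

Lemma wwl_S d k u : wwl d k u -> wwl d (S k) u.
Proof.
  intros H i Hi. rewrite <- Nat.add_1_r, segsum_add. specialize (H i). lia.
Qed.

Lemma wwl_repeat_true d k m : d <= k -> wwl d k (repeat true m).
Proof.
  intros Hd i Hi. rewrite repeat_length in Hi.
  rewrite (segsum_ext _ (fun _ => 1)), segsum_const; [lia|].
  intros j Hj. unfold bit. rewrite nth_repeat_lt; auto. lia.
Qed.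

(** * The recurrence for the number of WWL vectors *)

Definition card_wwl (d k m : nat) : nat := count_vec m (wwlb d k).

Definition light (d : nat) (r : list bool) : bool := weight r <? d.

Definition count_light (d k : nat) : nat := count_vec k (light d).

Definition count_blocked (d k n : nat) : nat :=
  count_vec n (fun v => wwlb d k (tl v) && light d (firstn k v)).

Section Recurrence.
Variables d k : nat.

Lemma card_wwl_pos m : d <= k -> 1 <= card_wwl d k m.
Proof.
  intros hdk. apply (count_vec_pos _ _ (repeat true m)); [apply repeat_length|].
  apply wwlbP, wwl_repeat_true; auto.
Qed.

Lemma card_wwl_S m : card_wwl d k (S m) <= 2 * card_wwl d k m.
Proof.
  unfold card_wwl. rewrite count_vec_S.
  assert (Htl : forall b, count_vec m (fun w => wwlb d k (b :: w)) <= count_vec m (wwlb d k)).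
  { intros b; apply count_vec_le; intros v _ H.
    apply wwlbP in H; apply wwlbP; eapply wwl_tl; eauto. }
  pose proof (Htl false); pose proof (Htl true); lia.
Qed.

Lemma card_wwl_short m : m < k -> card_wwl d k m = 2 ^ m.
Proof.
  intros H. unfold card_wwl. rewrite <- count_vec_true.
  apply count_vec_ext; intros. apply wwlbP, wwl_short; lia.
Qed.

Lemma card_wwl_rec m : k <= S m ->
  2 * card_wwl d k m = card_wwl d k (S m) + count_blocked d k (S m).
Proof.
  intros H. unfold count_blocked, card_wwl.
  assert (E : 2 * count_vec m (wwlb d k) = count_vec (S m) (fun v => wwlb d k (tl v))).
  { rewrite count_vec_S, (count_vec_ext m (fun w => wwlb d k (tl (false :: w))) (wwlb d k)),
      (count_vec_ext m (fun w => wwlb d k (tl (true :: w))) (wwlb d k)); auto. lia. }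
  rewrite E, (count_vec_split _ _ (fun v => negb (light d (firstn k v)))).
  f_equal; apply count_vec_ext; intros [|b u] Hv; simpl in Hv; [lia| |lia|].
  - apply eq_true_iff_eq. rewrite andb_true_iff, !wwlbP, wwl_cons by lia.
    unfold light. rewrite negb_true_iff, Nat.ltb_ge, weight_firstn. simpl tl. tauto.
  - simpl tl. rewrite negb_involutive. reflexivity.
Qed.

Lemma count_blocked_le n : 1 <= k <= n ->
  count_blocked d k n <= count_light d k * card_wwl d k (n - k).
Proof.
  intros H. unfold count_blocked, count_light, card_wwl. rewrite <- count_vec_app.
  replace n with (k + (n - k)) at 1 by lia. apply count_vec_le.
  intros [|b u] Hv Hb; simpl in Hv; [lia|].
  apply andb_true_iff in Hb as [H1 H2]. apply andb_true_iff; split; auto.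
  apply wwlbP in H1; apply wwlbP. destruct k as [|k']; [lia|].
  exact (wwl_skipn _ _ k' u H1).
Qed.

Lemma blocked_of_prefix v : 1 <= d <= k -> 2 * k + d <= length v ->
  segsum (bit v) 0 k = d - 1 -> segsum (bit v) 0 (d - 1) = 0 -> segsum (bit v) k d = d ->
  wwl d k (skipn (k + d) v) ->
  wwl d k (tl v) /\ weight (firstn k v) < d.
Proof.
  intros Hdk Hl H1 H2 H3 H4. split; [|rewrite weight_firstn; lia].
  destruct v as [|b u]; [simpl in Hl; lia|]. simpl tl. intros i Hi.
  rewrite <- (segsum_cons b). set (f := bit (b :: u)) in *. simpl length in *.
  rewrite !segsum_isum in *. rewrite Nat.add_0_l in H1, H2.
  pose proof (isum_bit_le (b :: u)) as Hle; fold f in Hle.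
  assert (Hw : forall j, k + d + j + k <= S (length u) -> d <= isum f (k + d + j) (k + d + j + k)).
  { intros j Hj. specialize (H4 j). rewrite segsum_skipn, segsum_isum, length_skipn in H4.
    apply H4. simpl length. lia. }
  set (j := S i). assert (Hj : 1 <= j /\ j + k <= S (length u)) by (unfold j; lia).
  clearbody j.
  destruct (Nat.le_gt_cases j (d - 1)); [|destruct (Nat.le_gt_cases j k);
    [|destruct (Nat.le_gt_cases j (k + d))]].
  - (* [j, k) carries all the d - 1 ones of [0, k), and [k, j + k) adds j more *)
    rewrite (isum_split f j k) by lia.
    rewrite (isum_split f 0 j) in H1, H2 by lia. rewrite (isum_split f k (j + k)) in H3 by lia.
    pose proof (Hle (j + k) (k + d)). lia.
  - (* the window contains [k, k + d) *)
    rewrite (isum_split f j k), (isum_split f k (k + d)) by lia. lia.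
  - (* [j, k + d) is all ones and the window at k + d has weight >= d *)
    specialize (Hw 0 ltac:(lia)). rewrite Nat.add_0_r in Hw.
    rewrite (isum_split f j (k + d)) by lia. rewrite (isum_split f k j) in H3 by lia.
    rewrite (isum_split f (k + d) (j + k)) in Hw by lia.
    pose proof (Hle k j). pose proof (Hle (j + k) (k + d + k)). lia.
  - specialize (Hw (j - (k + d)) ltac:(lia)).
    replace (k + d + (j - (k + d))) with j in Hw by lia. exact Hw.
Qed.

End Recurrence.

Lemma count_light_0 k : count_light 0 k = 0.
Proof.
  unfold count_light. rewrite <- (count_vec_false k) at 2.
  apply count_vec_ext; intros; apply Nat.ltb_ge; lia.
Qed.

Lemma count_light_S d k : count_light (S d) (S k) = count_light (S d) k + count_light d k.
Proof.
  unfold count_light. rewrite count_vec_S.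
  f_equal; apply count_vec_ext; intros v _; unfold light; rewrite weight_cons; reflexivity.
Qed.

Lemma count_light_le d k : count_light (S d) k <= (k + 1) ^ d.
Proof.
  revert d; induction k as [|k IH]; intros d.
  - unfold count_light. rewrite count_vec_0, Nat.pow_1_l. simpl. lia.
  - rewrite count_light_S. destruct d as [|d].
    + rewrite count_light_0. pose proof (IH 0). simpl in *. lia.
    + pose proof (IH (S d)). pose proof (IH d).
      assert ((k + 1) ^ d <= (k + 2) ^ d) by (apply Nat.pow_le_mono_l; lia).
      replace (S k + 1) with (k + 2) by lia. simpl in *. nia.
Qed.

(** * Vectors blocked by a prescribed prefix *)

Definition allzero (l : list bool) : bool := weight l =? 0.
Definition allone (l : list bool) : bool := weight l =? length l.
Definition unit_weight (l : list bool) : bool := weight l =? 1.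

Lemma count_vec_allzero m : count_vec m allzero = 1.
Proof.
  induction m as [|m IH]; auto. rewrite count_vec_S.
  rewrite (count_vec_ext m (fun w => allzero (false :: w)) allzero),
    (count_vec_ext m (fun w => allzero (true :: w)) (fun _ => false)), count_vec_false, IH;
    auto; intros v _; unfold allzero; rewrite weight_cons; reflexivity.
Qed.

Lemma count_vec_allone m : count_vec m allone = 1.
Proof.
  induction m as [|m IH]; auto. rewrite count_vec_S.
  rewrite (count_vec_ext m (fun w => allone (false :: w)) (fun _ => false)),
    (count_vec_ext m (fun w => allone (true :: w)) allone), count_vec_false, IH;
    auto; intros v _; unfold allone; rewrite weight_cons; simpl; auto.
  apply Nat.eqb_neq. pose proof (weight_le_length v). lia.
Qed.

Lemma count_vec_unit_weight m : count_vec m unit_weight = m.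
Proof.
  induction m as [|m IH]; auto. rewrite count_vec_S.
  rewrite (count_vec_ext m (fun w => unit_weight (false :: w)) unit_weight),
    (count_vec_ext m (fun w => unit_weight (true :: w)) allzero), count_vec_allzero, IH;
    [lia| |]; intros v _; unfold allzero, unit_weight; rewrite weight_cons; reflexivity.
Qed.

Fixpoint unit_blocks (j q : nat) (v : list bool) : bool :=
  match j with
  | O => true
  | S j' => unit_weight (firstn q v) && unit_blocks j' q (skipn q v)
  end.

Lemma count_vec_unit_blocks j q : count_vec (j * q) (unit_blocks j q) = q ^ j.
Proof.
  induction j as [|j IH]; [reflexivity|].
  change (S j * q) with (q + j * q). simpl unit_blocks.
  rewrite count_vec_app, count_vec_unit_weight, IH. reflexivity.
Qed.

Lemma weight_unit_blocks j q v :
  length v = j * q -> unit_blocks j q v = true -> weight v = j.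
Proof.
  revert v; induction j as [|j IH]; intros v Hl H.
  - destruct v; [reflexivity|simpl in Hl; lia].
  - simpl in H. apply andb_true_iff in H as [H1 H2]. apply Nat.eqb_eq in H1.
    rewrite <- (firstn_skipn q v), weight_app, H1, IH; auto.
    rewrite length_skipn. simpl in Hl. lia.
Qed.

Section Pattern.
Variables d k : nat.
Hypothesis hdk : 1 <= d <= k.

(* The prefix 0^(d-1) B_1 ... B_(d-1) 0^gap 1^d of length k + d, where each B_i has length
   block_len and weight one, and gap puts 1^d at position k: its first window has weight d - 1,
   and every later window meets 1^d in enough places. *)
Definition block_len : nat := (k - d + 1) / (d - 1).
Definition gap : nat := k - (d - 1) - (d - 1) * block_len.

Definition prefix_tail (w : list bool) : bool := allzero (firstn gap w) && allone (skipn gap w).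
Definition prefix_mid (w : list bool) : bool :=
  unit_blocks (d - 1) block_len (firstn ((d - 1) * block_len) w)
  && prefix_tail (skipn ((d - 1) * block_len) w).
Definition blocking_prefix (v : list bool) : bool :=
  allzero (firstn (d - 1) v) && prefix_mid (skipn (d - 1) v).

Lemma blocks_fit : (d - 1) + (d - 1) * block_len <= k.
Proof. unfold block_len. pose proof (Nat.Div0.mul_div_le (k - d + 1) (d - 1)). lia. Qed.

Lemma count_blocking_prefix : count_vec (k + d) blocking_prefix = block_len ^ (d - 1).
Proof.
  pose proof blocks_fit.
  replace (k + d) with ((d - 1) + ((d - 1) * block_len + (gap + d))) by (unfold gap; lia).
  unfold blocking_prefix; rewrite count_vec_app; unfold prefix_mid; rewrite count_vec_app;
  unfold prefix_tail; rewrite count_vec_app, count_vec_unit_blocks, count_vec_allone.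
  rewrite !count_vec_allzero. lia.
Qed.

Lemma blocking_prefix_spec r : length r = k + d -> blocking_prefix r = true ->
  segsum (bit r) 0 k = d - 1 /\ segsum (bit r) 0 (d - 1) = 0 /\ segsum (bit r) k d = d.
Proof.
  intros Hl H. pose proof blocks_fit. unfold blocking_prefix, prefix_mid, prefix_tail in H.
  repeat rewrite andb_true_iff in H. destruct H as [Hz [Hb [Hz' Ho]]].
  unfold allzero, allone in *. apply Nat.eqb_eq in Hz, Hz', Ho.
  apply weight_unit_blocks in Hb; [|rewrite length_firstn, length_skipn; lia].
  rewrite weight_firstn in Hz. rewrite weight_firstn, segsum_skipn in Hb.
  rewrite weight_firstn, !segsum_skipn in Hz'.
  rewrite !skipn_skipn, weight_segsum, length_skipn, segsum_skipn in Ho.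
  rewrite !segsum_isum in *. rewrite ?Nat.add_0_l, ?Nat.add_0_r in *.
  set (b := d - 1 + (d - 1) * block_len) in *.
  replace (gap + (d - 1) * block_len + (d - 1)) with k in Ho by (unfold gap, b in *; lia).
  replace (b + gap) with k in Hz' by (unfold gap, b in *; lia).
  rewrite Hl in Ho. replace (k + (k + d - k)) with (k + d) in Ho by lia.
  assert (d - 1 <= b) by apply Nat.le_add_r.
  rewrite (isum_split _ 0 (d - 1) k), (isum_split _ (d - 1) b k) by lia.
  lia.
Qed.

Lemma count_blocked_ge n : 2 * k + d <= n ->
  count_vec (k + d) blocking_prefix * card_wwl d k (n - (k + d)) <= count_blocked d k n.
Proof.
  intros Hn. unfold card_wwl, count_blocked. rewrite <- count_vec_app.
  replace (k + d + (n - (k + d))) with n by lia.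
  apply count_vec_le. intros v Hv H. apply andb_true_iff in H as [H1 H2].
  apply blocking_prefix_spec in H1; [|rewrite length_firstn; lia].
  rewrite !segsum_firstn in H1 by lia. destruct H1 as [E1 [E2 E3]].
  apply wwlbP in H2.
  destruct (blocked_of_prefix d k v hdk ltac:(lia) E1 E2 E3 H2) as [G W].
  apply andb_true_iff; split; [apply wwlbP; auto|apply Nat.ltb_lt; auto].
Qed.

End Pattern.

Lemma block_len_large d k : 2 <= d -> 4 * d <= k -> k <= 2 * d * block_len d k.
Proof.
  intros Hd Hk. unfold block_len.
  pose proof (Nat.div_mod (k - d + 1) (d - 1) ltac:(lia)).
  pose proof (Nat.mod_upper_bound (k - d + 1) (d - 1) ltac:(lia)). nia.
Qed.

Open Scope R_scope.

Lemma ln_le x y : 0 < x -> x <= y -> ln x <= ln y.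
Proof.
  intros Hx Hxy. destruct (Rle_lt_or_eq_dec _ _ Hxy) as [H| ->]; [|lra].
  left; apply ln_increasing; auto.
Qed.

Lemma ln2_lt_1 : ln 2 < 1.
Proof. rewrite <- (ln_exp 1). apply ln_increasing; [lra|]. pose proof (exp_ineq1 1). lra. Qed.

Lemma ln2_pos : 0 < ln 2.
Proof. pose proof ln_lt_2. lra. Qed.

Lemma log2R_le x y : 0 < x -> x <= y -> log2R x <= log2R y.
Proof.
  intros. unfold log2R. apply Rmult_le_compat_r; [left; apply Rinv_0_lt_compat, ln2_pos|].
  apply ln_le; auto.
Qed.

Lemma INR_pow2 m : INR (2 ^ m) = 2 ^ m.
Proof. rewrite pow_INR. f_equal. Qed.

Lemma log2R_pow2 m : log2R (2 ^ m) = INR m.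
Proof. unfold log2R. rewrite ln_pow by lra. field. apply Rgt_not_eq, ln2_pos. Qed.

Lemma log2R_mult x y : 0 < x -> 0 < y -> log2R (x * y) = log2R x + log2R y.
Proof. intros. unfold log2R. rewrite ln_mult by auto. field. apply Rgt_not_eq, ln2_pos. Qed.

Lemma log2R_geometric x m : x < 1 ->
  log2R ((2 * (1 - x)) ^ m) = INR m + INR m * ln (1 - x) / ln 2.
Proof.
  intros Hx. unfold log2R. pose proof ln2_pos.
  rewrite ln_pow, ln_mult by lra. field. lra.
Qed.

Lemma ln_1_minus_le x : x < 1 -> ln (1 - x) <= - x.
Proof.
  intros Hx. rewrite <- (ln_exp (- x)). apply ln_le; [lra|].
  pose proof (exp_ineq1_le (- x)). lra.
Qed.

Lemma ln_1_minus_ge x : 0 <= x <= / 2 -> - (2 * x) <= ln (1 - x).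
Proof.
  intros Hx. rewrite <- (ln_exp (- (2 * x))). apply ln_le; [apply exp_pos|].
  rewrite exp_Ropp. pose proof (exp_ineq1_le (2 * x)). pose proof (exp_pos (2 * x)).
  apply (Rmult_le_reg_r (exp (2 * x))); auto. rewrite Rinv_l by lra. nra.
Qed.

Lemma bernoulli_ineq x n : 0 <= x <= 1 -> 1 - INR n * x <= (1 - x) ^ n.
Proof.
  intros Hx. induction n as [|n IH]; [simpl; lra|]. rewrite S_INR. simpl.
  assert (0 <= (1 - x) ^ n) by (apply pow_le; lra). pose proof (pos_INR n). nra.
Qed.

Lemma geometric_chain (f : nat -> R) (lam : R) (j : nat) : 0 <= lam ->
  (forall i, (i < j)%nat -> lam * f i <= f (S i)) ->
  forall i t, (i + t <= j)%nat -> lam ^ t * f i <= f (i + t)%nat.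
Proof.
  intros Hl H i t. induction t as [|t IH]; intros Ht; [simpl; rewrite Nat.add_0_r; lra|].
  rewrite Nat.add_succ_r. specialize (H (i + t)%nat ltac:(lia)). specialize (IH ltac:(lia)).
  simpl. nra.
Qed.

Lemma pow_almost_2_ge e k : (1 <= k)%nat -> 0 <= e -> INR k * e <= / 2 ->
  2 ^ k / 4 <= (2 * (1 - e)) ^ (k - 1).
Proof.
  intros Hk He Hke. rewrite Rpow_mult_distr.
  assert (1 <= INR k) by (apply (le_INR 1); auto).
  pose proof (bernoulli_ineq e (k - 1) ltac:(nra)) as Hb.
  rewrite minus_INR in Hb by auto. simpl in Hb.
  replace (2 ^ k) with (2 * 2 ^ (k - 1)) by (replace k with (S (k - 1)) at 2 by lia; reflexivity).
  assert (0 < 2 ^ (k - 1)) by (apply pow_lt; lra). nra.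
Qed.

(** * Growth of the number of WWL vectors *)

Definition deficit (d k m : nat) : R := INR m - log2R (INR (card_wwl d k m)).

Section Growth.
Variables d k : nat.
Hypothesis hdk : (1 <= d <= k)%nat.

Let A m := INR (card_wwl d k m).

Lemma card_wwl_ge_1 m : 1 <= A m.
Proof. apply (le_INR 1), card_wwl_pos. lia. Qed.

Lemma card_wwl_add_le x t : A (x + t) <= 2 ^ t * A x.
Proof.
  induction t as [|t IH]; [simpl; rewrite Nat.add_0_r; lra|].
  rewrite Nat.add_succ_r. pose proof (le_INR _ _ (card_wwl_S d k (x + t))) as H.
  rewrite mult_INR in H. unfold A in *. simpl in *. lra.
Qed.

Lemma deficit_ge_0 m : 0 <= deficit d k m.
Proof.
  unfold deficit. enough (log2R (A m) <= INR m) by (unfold A in *; lra).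
  rewrite <- (log2R_pow2 m). apply log2R_le.
  - pose proof (card_wwl_ge_1 m). lra.
  - rewrite <- INR_pow2. apply le_INR, count_vec_le_pow.
Qed.

Section Light.
Let eps := 2 * INR (count_light d k) / 2 ^ k.
Hypothesis few_light : 4 * INR k * INR (count_light d k) <= 2 ^ k.

Lemma eps_bounds : 0 <= eps /\ INR k * eps <= / 2.
Proof.
  assert (Hk2 : 0 < 2 ^ k) by (apply pow_lt; lra).
  pose proof (pos_INR (count_light d k)). split; unfold eps.
  - apply Rmult_le_pos; [lra|left; apply Rinv_0_lt_compat; auto].
  - apply (Rmult_le_reg_r (2 ^ k)); auto. field_simplify; lra.
Qed.

Lemma card_wwl_ratio_ge j : 2 * (1 - eps) * A j <= A (S j).
Proof.
  destruct eps_bounds as [He0 Hke]. assert (1 <= INR k) by (apply (le_INR 1); lia).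
  set (lam := 2 * (1 - eps)). assert (Hlam : 1 <= lam) by (unfold lam; nra).
  induction j as [j IH] using (well_founded_induction lt_wf).
  destruct (Nat.lt_ge_cases (S j) k) as [C|C].
  - unfold A. rewrite !card_wwl_short, !INR_pow2 by lia. simpl. unfold lam.
    pose proof (pow_le 2 j ltac:(lra)). nra.
  - (* A (S j) = 2 A j - blocked, and by induction A (S j - k) <= 4 A j / 2^k bounds the
       blocked vectors by 2 eps A j *)
    pose proof (card_wwl_rec d k j C) as R.
    pose proof (count_blocked_le d k (S j) ltac:(lia)) as B.
    apply (f_equal INR) in R. apply le_INR in B. rewrite mult_INR, plus_INR in R.
    rewrite mult_INR in B. fold (A j) (A (S j)) (A (S j - k)%nat) in R, B. simpl in R.
    pose proof (geometric_chain A lam j ltac:(lra) (fun i Hi => IH i Hi) (S j - k) (k - 1)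
      ltac:(lia)) as Ch.
    replace (S j - k + (k - 1))%nat with j in Ch by lia.
    pose proof (pow_almost_2_ge eps k ltac:(lia) He0 Hke) as Hp. fold lam in Hp.
    assert (Hk2 : 0 < 2 ^ k) by (apply pow_lt; lra).
    pose proof (card_wwl_ge_1 (S j - k)). pose proof (pos_INR (count_light d k)).
    assert (Hs : A (S j - k)%nat <= 4 * A j / 2 ^ k).
    { apply (Rmult_le_reg_r (2 ^ k / 4)); [lra|]. field_simplify; nra. }
    assert (INR (count_light d k) * A (S j - k)%nat <= 2 * eps * A j).
    { unfold eps. replace (2 * (2 * INR (count_light d k) / 2 ^ k) * A j)
        with (INR (count_light d k) * (4 * A j / 2 ^ k)) by (field; lra).
      apply Rmult_le_compat_l; auto. }
    unfold lam. lra.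
Qed.

Lemma deficit_le m : deficit d k m <= 8 * INR (count_light d k) / 2 ^ k * INR m.
Proof.
  destruct eps_bounds as [He0 Hke]. assert (1 <= INR k) by (apply (le_INR 1); lia).
  assert (Hge : (2 * (1 - eps)) ^ m <= A m).
  { induction m as [|m IH]; [unfold A; rewrite card_wwl_short by lia; simpl; lra|].
    simpl. pose proof (card_wwl_ratio_ge m). assert (0 <= 1 - eps) by nra. nra. }
  apply log2R_le in Hge; [|apply pow_lt; nra].
  rewrite log2R_geometric in Hge by nra.
  pose proof (ln_1_minus_ge eps ltac:(nra)). pose proof ln_lt_2. pose proof (pos_INR m).
  replace (8 * INR (count_light d k) / 2 ^ k) with (4 * eps)
    by (unfold eps; field; apply pow_nonzero; lra).
  assert (INR m * ln (1 - eps) / ln 2 >= - (4 * eps) * INR m).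
  { apply Rle_ge, (Rmult_le_reg_r (ln 2)); [lra|].
    replace (INR m * ln (1 - eps) / ln 2 * ln 2) with (INR m * ln (1 - eps)) by (field; lra).
    assert (0 <= eps * INR m * (ln 2 - / 2)) by (apply Rmult_le_pos; nra).
    assert (0 <= INR m * (ln (1 - eps) + 2 * eps)) by (apply Rmult_le_pos; lra).
    nra. }
  unfold deficit. fold (A m). lra.
Qed.

End Light.

Section Blocked.
Let x := INR (count_vec (k + d) (blocking_prefix d k)) / 2 ^ (k + d).
Let T := (2 * k + d - 1)%nat.

Lemma card_wwl_contract n : (T < n)%nat -> A n <= 2 * (1 - x) * A (n - 1).
Proof.
  intros Hn. set (R0 := INR (count_vec (k + d) (blocking_prefix d k))).
  pose proof (card_wwl_rec d k (n - 1) ltac:(unfold T in *; lia)) as R.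
  pose proof (count_blocked_ge d k hdk n ltac:(unfold T in *; lia)) as B.
  pose proof (card_wwl_add_le (n - (k + d)) (k + d - 1)) as C.
  replace (n - (k + d) + (k + d - 1))%nat with (n - 1)%nat in C by (unfold T in *; lia).
  replace (S (n - 1)) with n in R by (unfold T in *; lia).
  apply (f_equal INR) in R. rewrite mult_INR, plus_INR in R. apply le_INR in B.
  rewrite mult_INR in B. fold R0 (A (n - 1)%nat) (A n) (A (n - (k + d))%nat) in R, B. simpl in R.
  assert (Hp : 2 ^ (k + d) = 2 * 2 ^ (k + d - 1)).
  { replace (k + d)%nat with (S (k + d - 1)) at 1 by lia. reflexivity. }
  assert (0 < 2 ^ (k + d - 1)) by (apply pow_lt; lra).
  assert (A (n - 1)%nat / 2 ^ (k + d - 1) <= A (n - (k + d))%nat).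
  { apply (Rmult_le_reg_r (2 ^ (k + d - 1))); auto. field_simplify; lra. }
  assert (R0 * (A (n - 1)%nat / 2 ^ (k + d - 1)) <= R0 * A (n - (k + d))%nat).
  { apply Rmult_le_compat_l; auto. apply pos_INR. }
  unfold x. fold R0. rewrite Hp.
  replace (2 * (1 - R0 / (2 * 2 ^ (k + d - 1))) * A (n - 1)%nat)
    with (2 * A (n - 1)%nat - R0 * (A (n - 1)%nat / 2 ^ (k + d - 1))) by (field; lra).
  pose proof (pos_INR (count_blocked d k n)). lra.
Qed.

Lemma deficit_ge m : (T <= m)%nat -> INR (m - T) * x <= deficit d k m.
Proof.
  intros Hm. assert (Hx0 : 0 <= x).
  { unfold x. apply Rmult_le_pos; [apply pos_INR|left; apply Rinv_0_lt_compat, pow_lt; lra]. }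
  assert (Hx1 : x < 1).
  { pose proof (card_wwl_contract (S T) ltac:(lia)) as H. rewrite Nat.sub_succ, Nat.sub_0_r in H.
    pose proof (card_wwl_ge_1 (S T)). pose proof (card_wwl_ge_1 T). nra. }
  set (t := (m - T)%nat). replace m with (T + t)%nat by (unfold t; lia).
  assert (Hit : A (T + t)%nat <= (2 * (1 - x)) ^ t * 2 ^ T).
  { pose proof (card_wwl_add_le 0 T) as H0. unfold A in H0.
    rewrite (card_wwl_short d k 0) in H0 by lia.
    simpl in H0. fold (A T) in H0.
    induction t as [|t IH]; [simpl; rewrite Nat.add_0_r; lra|].
    pose proof (card_wwl_contract (T + S t) ltac:(lia)) as H.
    replace (T + S t - 1)%nat with (T + t)%nat in H by lia. simpl. nra. }
  apply log2R_le in Hit; [|pose proof (card_wwl_ge_1 (T + t)); lra].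
  rewrite log2R_mult, log2R_geometric, log2R_pow2 in Hit by (try apply pow_lt; lra).
  pose proof (ln_1_minus_le x Hx1). pose proof ln2_lt_1. pose proof ln2_pos.
  pose proof (pos_INR t).
  assert (INR t * ln (1 - x) / ln 2 <= - (INR t * x)).
  { apply (Rmult_le_reg_r (ln 2)); [lra|].
    replace (INR t * ln (1 - x) / ln 2 * ln 2) with (INR t * ln (1 - x)) by (field; lra).
    assert (0 <= INR t * x * (1 - ln 2)) by (apply Rmult_le_pos; nra).
    assert (0 <= INR t * (- x - ln (1 - x))) by (apply Rmult_le_pos; lra).
    nra. }
  unfold deficit. fold (A (T + t)%nat). rewrite plus_INR. lra.
Qed.

End Blocked.

End Growth.

Lemma card_C2 n k d : card_set (C2 n k d) = card_wwl d k (n - k - ell d - 2 * d).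
Proof.
  unfold card_set, C2, A2, card_wwl, count_vec. rewrite nodup_fixed_point.
  - apply length_map.
  - apply NoDup_map_NoDup_ForallPairs; [|apply NoDup_filter, NoDup_all_vectors].
    intros x y _ _ H. rewrite !app_assoc in H. apply app_inv_tail in H.
    rewrite <- !app_assoc in H. do 3 apply app_inv_head in H. exact H.
Qed.

Lemma redC_eq n k d : admissible n k d ->
  redC n k d = INR k + INR (ell d + 2 * d) + deficit d k (n - k - ell d - 2 * d).
Proof.
  intros [H1 H2]. unfold redC, deficit. rewrite card_C2.
  replace (INR n) with (INR (k + (ell d + 2 * d) + (n - k - ell d - 2 * d))) at 1
    by (f_equal; lia).
  rewrite !plus_INR. ring.
Qed.

Lemma deficit_mono_m d k m m' : (1 <= d <= k)%nat -> (m <= m')%nat ->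
  deficit d k m <= deficit d k m'.
Proof.
  intros hdk Hm. induction Hm as [|m' Hm IH]; [lra|]. eapply Rle_trans; [apply IH|].
  pose proof (le_INR _ _ (card_wwl_S d k m')) as H. rewrite mult_INR in H.
  apply log2R_le in H; [|pose proof (card_wwl_ge_1 d k hdk (S m')); lra].
  rewrite log2R_mult in H by (pose proof (card_wwl_ge_1 d k hdk m'); simpl; lra).
  replace (INR 2) with (2 ^ 1) in H by (simpl; lra). rewrite log2R_pow2 in H.
  unfold deficit. rewrite S_INR. simpl in H. lra.
Qed.

Lemma deficit_antimono_k d k k' m : (1 <= d <= k)%nat -> (k <= k')%nat ->
  deficit d k' m <= deficit d k m.
Proof.
  intros hdk Hk. unfold deficit. apply Rplus_le_compat_l, Ropp_le_contravar, log2R_le.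
  - pose proof (card_wwl_ge_1 d k hdk m); lra.
  - apply le_INR, count_vec_le. intros v _ H. apply wwlbP in H; apply wwlbP.
    induction Hk; auto. apply wwl_S; auto.
Qed.

Lemma count_blocking_prefix_ge d k : (1 <= d)%nat -> (4 * d <= k)%nat ->
  (INR k / (2 * INR d)) ^ (d - 1) <= INR (count_vec (k + d) (blocking_prefix d k)).
Proof.
  intros hd Hk. rewrite count_blocking_prefix, pow_INR by lia.
  destruct (Nat.eq_dec d 1) as [->|E]; [simpl; lra|].
  assert (Hd0 : 0 < INR d) by (apply (lt_INR 0); lia).
  apply pow_incr. split.
  - apply Rmult_le_pos; [apply pos_INR|left; apply Rinv_0_lt_compat; lra].
  - pose proof (le_INR _ _ (block_len_large d k ltac:(lia) Hk)) as H.
    rewrite !mult_INR in H. apply (Rmult_le_reg_r (2 * INR d)); [lra|].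
    field_simplify; [simpl in H; lra|lra].
Qed.

Lemma Rpower2_log2R x : 0 < x -> Rpower 2 (log2R x) = x.
Proof. intros. apply Rpower_Rlog; lra. Qed.

Lemma Rpower2_nat k : Rpower 2 (INR k) = 2 ^ k.
Proof. apply Rpower_pow. lra. Qed.

Lemma Rpower2_sq y : 0 <= y -> y ^ 2 / 16 <= Rpower 2 y.
Proof.
  intros H. unfold Rpower. replace (y * ln 2) with (y * ln 2 / 2 + y * ln 2 / 2) by field.
  rewrite exp_plus. pose proof (exp_ineq1_le (y * ln 2 / 2)). pose proof ln_lt_2.
  assert (y / 4 <= 1 + y * ln 2 / 2) by nra. simpl. nra.
Qed.

Lemma Rpower2_dominates c a b : 0 < c -> 0 <= a -> 0 <= b ->
  exists T0, 0 <= T0 /\ forall t, T0 <= t -> a * t + b <= c * Rpower 2 t.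
Proof.
  intros Hc Ha Hb. set (s := 16 * (a + b + 1) / c).
  assert (Hs : 0 <= s) by (apply Rmult_le_pos; [lra|left; apply Rinv_0_lt_compat; auto]).
  exists (1 + s). split; [lra|]. intros t Ht.
  pose proof (Rpower2_sq t ltac:(lra)).
  assert (c * t >= 16 * (a + b + 1)).
  { assert (c * s = 16 * (a + b + 1)) by (unfold s; field; lra). nra. }
  assert (c * (t ^ 2 / 16) <= c * Rpower 2 t) by (apply Rmult_le_compat_l; lra).
  simpl in *. nra.
Qed.

Lemma ceil_nat x : 0 <= x -> exists k : nat, x < INR k <= x + 1.
Proof.
  intros H. destruct (archimed x) as [H1 H2]. exists (Z.to_nat (up x)).
  rewrite INR_IZR_INZ, Z2Nat.id; [lra|]. apply le_IZR. lra.
Qed.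

Lemma list_argmin (f : nat -> R) (l : list nat) : l <> [] ->
  exists x, In x l /\ forall y, In y l -> f x <= f y.
Proof.
  induction l as [|h t IH]; intros H; [congruence|].
  destruct t as [|h2 t].
  { exists h. split; [left; auto|]. intros y [<-|[]]; lra. }
  destruct IH as [x [Hx Hm]]; [discriminate|].
  destruct (Rle_lt_dec (f h) (f x)).
  - exists h; split; [left; auto|]. intros y [<-|Hy]; [lra|]. specialize (Hm y Hy); lra.
  - exists x; split; [right; auto|]. intros y [<-|Hy]; [lra|auto].
Qed.

Lemma exists_minimizer n k0 d : admissible n k0 d -> exists k, is_minimizer n k d.
Proof.
  intros Hk0.
  set (l := filter (fun k => (ell d <=? k)%nat && (k + ell d + 2 * d <=? n)%nat) (seq 0 (S n))).
  assert (Hin : forall k, In k l <-> admissible n k d).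
  { intros k. unfold l, admissible. rewrite filter_In, in_seq, andb_true_iff, !Nat.leb_le. lia. }
  destruct (list_argmin (fun k => redC n k d) l) as [x [Hx Hm]].
  { intros E. apply Hin in Hk0. rewrite E in Hk0. destruct Hk0. }
  exists x. split; [apply Hin; auto|]. intros k Hk. apply Hm, Hin; auto.
Qed.

Lemma admissible_d_le_k n k d : admissible n k d -> (1 <= d -> 1 <= d <= k)%nat.
Proof. unfold admissible, ell. lia. Qed.

Lemma redC_ge_k n k d : (1 <= d)%nat -> admissible n k d -> INR k <= redC n k d.
Proof.
  intros hd Hk. rewrite redC_eq by auto. pose proof (pos_INR (ell d + 2 * d)).
  pose proof (deficit_ge_0 d k (admissible_d_le_k n k d Hk hd) (n - k - ell d - 2 * d)). lra.
Qed.

(** * Asymptotics *)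

Definition upper_const (d : nat) : R := 1 + INR (ell d + 2 * d) + 8 * 2 ^ (d - 1).
Definition lower_const (d : nat) : R := / (2 * (4 * INR d) ^ (d - 1) * 2 ^ d).
Definition size_const (d : nat) : R := 12 + 2 * INR (ell d) + 6 * INR d + 2 ^ (d + 2).

Section Asymptotics.
Variables d n : nat.
Hypothesis hd : (1 <= d)%nat.
Hypothesis hn : (1 <= n)%nat.

Let L := log2R (INR n).
Let M := main_term n d.

Hypothesis L_ge_d : 64 * INR d ^ 2 <= L.
Hypothesis L_ge_size : 16 * size_const d <= L.

Lemma d_ge_1 : 1 <= INR d.
Proof. apply (le_INR 1); auto. Qed.

Lemma L_ge_64 : 64 <= L.
Proof. pose proof d_ge_1. nra. Qed.

Lemma Rpower2_L : Rpower 2 L = INR n.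
Proof. apply Rpower2_log2R, (lt_INR 0). lia. Qed.

Lemma n_ge_size : size_const d * L <= INR n.
Proof.
  pose proof L_ge_64. pose proof (Rpower2_sq L ltac:(lra)). rewrite Rpower2_L in H0.
  simpl in H0. nra.
Qed.

Lemma loglog_bounds : 0 <= log2R L <= L / (2 * INR d).
Proof.
  pose proof L_ge_64. pose proof d_ge_1. set (l := log2R L).
  assert (Hl0 : 0 <= l).
  { unfold l, log2R. apply Rmult_le_pos; [|left; apply Rinv_0_lt_compat, ln2_pos].
    rewrite <- ln_1. apply ln_le; lra. }
  split; auto. pose proof (Rpower2_sq l Hl0) as Hsq.
  replace (Rpower 2 l) with L in Hsq by (symmetry; apply Rpower2_log2R; lra).
  apply (Rmult_le_reg_r (2 * INR d)); [lra|]. field_simplify; [|lra].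
  (* l^2 <= 16 L and L >= 64 d^2 force 2 d l <= L *)
  destruct (Rle_lt_dec (l * 2 * INR d) L) as [C|C]; [lra|exfalso].
  assert (L * L < (l * 2 * INR d) * (l * 2 * INR d)) by (apply Rmult_le_0_lt_compat; lra).
  simpl in *. nra.
Qed.

Lemma main_term_bounds : L <= M <= 3 * L / 2.
Proof.
  pose proof loglog_bounds. pose proof d_ge_1. pose proof L_ge_64.
  unfold M, main_term. fold L. split; [nra|].
  assert ((INR d - 1) * log2R L <= (INR d - 1) * (L / (2 * INR d)))
    by (apply Rmult_le_compat_l; lra).
  assert ((INR d - 1) * (L / (2 * INR d)) <= L / 2).
  { apply (Rmult_le_reg_r (2 * INR d)); [lra|]. field_simplify; nra. }
  lra.
Qed.

Lemma Rpower2_main_term : Rpower 2 M = INR n * L ^ (d - 1).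
Proof.
  pose proof L_ge_64. unfold M, main_term. fold L.
  rewrite Rpower_plus, Rpower2_L. f_equal.
  replace (INR d - 1) with (INR (d - 1)) by (rewrite minus_INR by auto; simpl; ring).
  rewrite Rmult_comm, <- Rpower_mult, Rpower2_log2R by lra. apply Rpower_pow. lra.
Qed.

Lemma light_le k : INR k + 1 <= 2 * L -> INR (count_light d k) <= (2 * L) ^ (d - 1).
Proof.
  intros Hk. eapply Rle_trans.
  - apply le_INR. replace d with (S (d - 1)) at 1 by lia. apply count_light_le.
  - rewrite pow_INR, plus_INR. apply pow_incr. simpl. split; [pose proof (pos_INR k)|]; lra.
Qed.

Lemma exists_good_k : exists k0, admissible n k0 d /\ redC n k0 d <= M + upper_const d.
Proof.
  pose proof main_term_bounds. pose proof n_ge_size. pose proof L_ge_64. pose proof d_ge_1.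
  pose proof (pos_INR (ell d)). unfold size_const in *.
  assert (0 < 2 ^ (d + 2)) by (apply pow_lt; lra).
  destruct (ceil_nat M ltac:(lra)) as [k0 [Hk1 Hk2]]. exists k0.
  assert (Had : admissible n k0 d).
  { split; apply INR_le; rewrite ?plus_INR, ?mult_INR; simpl (INR 2); nra. }
  split; auto. rewrite redC_eq by auto.
  set (m := (n - k0 - ell d - 2 * d)%nat). set (Lk := INR (count_light d k0)).
  assert (HLk : Lk <= (2 * L) ^ (d - 1)) by (apply light_le; lra).
  assert (Hk0 : INR n * L ^ (d - 1) <= 2 ^ k0).
  { rewrite <- Rpower2_main_term, <- Rpower2_nat. apply Rle_Rpower; lra. }
  assert (HLd : (2 * L) ^ (d - 1) = 2 ^ (d - 1) * L ^ (d - 1)) by apply Rpow_mult_distr.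
  assert (Hd2 : 2 ^ (d + 2) = 8 * 2 ^ (d - 1)).
  { replace (d + 2)%nat with (3 + (d - 1))%nat by lia. rewrite pow_add. simpl. ring. }
  assert (0 <= L ^ (d - 1)) by (apply pow_le; lra). assert (0 <= Lk) by apply pos_INR.
  assert (0 <= 2 ^ (d - 1)) by (apply pow_le; lra).
  (* 2^k0 >= n L^(d-1) absorbs both the light windows and the length of the tail *)
  assert (Hfew : 4 * INR k0 * Lk <= 2 ^ k0).
  { assert (4 * INR k0 * Lk <= 4 * (2 * L) * (2 ^ (d - 1) * L ^ (d - 1))).
    { rewrite <- HLd. pose proof (pos_INR k0). apply Rmult_le_compat; lra. }
    assert (2 ^ (d + 2) * L * L ^ (d - 1) <= INR n * L ^ (d - 1)) by (apply Rmult_le_compat_r; nra).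
    nra. }
  pose proof (deficit_le d k0 (admissible_d_le_k n k0 d Had hd) Hfew m) as Hdef.
  assert (Hm : INR m <= INR n) by (apply le_INR; unfold m; lia).
  assert (8 * Lk / 2 ^ k0 * INR m <= 8 * 2 ^ (d - 1)).
  { assert (Hp : 0 < 2 ^ k0) by (apply pow_lt; lra).
    apply (Rmult_le_reg_r (2 ^ k0)); auto. field_simplify; [|lra].
    assert (Lk * INR m <= (2 * L) ^ (d - 1) * INR n) by (apply Rmult_le_compat; auto using pos_INR).
    nra. }
  fold Lk in Hdef. unfold upper_const. lra.
Qed.

Lemma deficit_ge_large k : admissible n k d -> L / 2 <= INR k <= M ->
  lower_const d * Rpower 2 (M - INR k) <= deficit d k (n - k - ell d - 2 * d).
Proof.
  intros Hk [HkL HkM]. pose proof main_term_bounds. pose proof n_ge_size. pose proof L_ge_64.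
  pose proof d_ge_1. pose proof (pos_INR (ell d)). unfold size_const in *.
  assert (0 < 2 ^ (d + 2)) by (apply pow_lt; lra).
  pose proof (admissible_d_le_k n k d Hk hd) as hdk.
  set (T := (2 * k + d - 1)%nat). set (m := (n - k - ell d - 2 * d)%nat).
  assert (Hsz : (2 * (3 * k + ell d + 3 * d) <= n)%nat).
  { apply INR_le. rewrite !mult_INR, !plus_INR, !mult_INR. simpl (INR 2); simpl (INR 3). nra. }
  assert (Hhalf : INR n / 2 <= INR (m - T)).
  { enough (INR n <= 2 * INR (m - T)) by lra.
    replace 2 with (INR 2) by reflexivity. rewrite <- mult_INR. apply le_INR. unfold m, T. lia. }
  assert (Hprefix : (L / (4 * INR d)) ^ (d - 1) <= INR (count_vec (k + d) (blocking_prefix d k))).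
  { eapply Rle_trans; [|apply count_blocking_prefix_ge; auto; apply INR_le; rewrite mult_INR;
      simpl (INR 4); nra].
    apply pow_incr. split.
    - apply Rmult_le_pos; [lra|left; apply Rinv_0_lt_compat; lra].
    - apply (Rmult_le_reg_r (4 * INR d)); [lra|]. field_simplify; lra. }
  eapply Rle_trans; [|apply (deficit_ge d k hdk m); unfold m, T; lia].
  fold T. assert (Hp : 0 < 2 ^ (k + d)) by (apply pow_lt; lra).
  assert (HLd : 0 < (4 * INR d) ^ (d - 1)) by (apply pow_lt; lra).
  assert (HLp : 0 < L ^ (d - 1)) by (apply pow_lt; lra).
  assert (E : lower_const d * Rpower 2 (M - INR k)
              = INR n / 2 * (L / (4 * INR d)) ^ (d - 1) / 2 ^ (k + d)).
  { replace (Rpower 2 (M - INR k)) with (Rpower 2 M / 2 ^ k).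
    2:{ rewrite <- Rpower2_nat. unfold Rminus. rewrite Rpower_plus, Rpower_Ropp. reflexivity. }
    assert (E1 : (L / (4 * INR d)) ^ (d - 1) = L ^ (d - 1) / (4 * INR d) ^ (d - 1)).
    { unfold Rdiv. rewrite Rpow_mult_distr, pow_inv. reflexivity. }
    rewrite Rpower2_main_term, pow_add, E1. unfold lower_const. field.
    repeat split; try apply pow_nonzero; lra. }
  set (Rc := INR (count_vec (k + d) (blocking_prefix d k))) in *.
  assert (INR n / 2 * (L / (4 * INR d)) ^ (d - 1) <= INR (m - T) * Rc).
  { apply Rmult_le_compat; auto; [pose proof (pos_INR n); lra|].
    apply pow_le, Rmult_le_pos; [lra|left; apply Rinv_0_lt_compat; lra]. }
  rewrite E. replace (INR (m - T) * (Rc / 2 ^ (k + d))) with (INR (m - T) * Rc / 2 ^ (k + d))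
    by (field; lra).
  unfold Rdiv. apply Rmult_le_compat_r; [left; apply Rinv_0_lt_compat|]; lra.
Qed.

Variable T0 : R.
Hypothesis L_ge_T0 : 2 * T0 + 2 <= L.
Hypothesis T0_ge_0 : 0 <= T0.
Hypothesis T0_growth :
  forall t, T0 <= t -> 2 * t + (upper_const d + 3) <= lower_const d * Rpower 2 t.

Lemma redC_ge_small k : admissible n k d -> INR k <= M - T0 -> M + upper_const d + 1 <= redC n k d.
Proof.
  intros Hk HkM. pose proof main_term_bounds. pose proof n_ge_size. pose proof L_ge_64.
  pose proof d_ge_1. pose proof (pos_INR (ell d)). unfold size_const in *.
  assert (0 < 2 ^ (d + 2)) by (apply pow_lt; lra).
  pose proof (admissible_d_le_k n k d Hk hd) as hdk.
  rewrite redC_eq by auto. pose proof (pos_INR (ell d + 2 * d)). pose proof (pos_INR k).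
  destruct (Rle_lt_dec (L / 2) (INR k)) as [C|C].
  - pose proof (deficit_ge_large k Hk ltac:(lra)). pose proof (T0_growth (M - INR k) ltac:(lra)).
    lra.
  - (* raising the window length to about L / 2 only lowers the deficit *)
    destruct (ceil_nat (L / 2) ltac:(lra)) as [K [HK1 HK2]].
    assert (HKad : admissible n K d).
    { split; apply INR_le; rewrite ?plus_INR, ?mult_INR; simpl (INR 2); nra. }
    assert (HkK : (k <= K)%nat) by (apply INR_le; lra).
    pose proof (deficit_ge_large K HKad ltac:(lra)).
    pose proof (T0_growth (M - INR K) ltac:(lra)).
    pose proof (deficit_antimono_k d k K (n - k - ell d - 2 * d) hdk HkK).
    pose proof (deficit_mono_m d K (n - K - ell d - 2 * d) (n - k - ell d - 2 * d)
      (admissible_d_le_k n K d HKad hd) ltac:(lia)).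
    lra.
Qed.

End Asymptotics.

Lemma upper_const_ge_0 d : 0 <= upper_const d.
Proof.
  unfold upper_const. pose proof (pos_INR (ell d + 2 * d)).
  assert (0 <= 2 ^ (d - 1)) by (apply pow_le; lra). lra.
Qed.

Lemma lower_const_pos d : (1 <= d)%nat -> 0 < lower_const d.
Proof.
  intros hd. unfold lower_const. assert (1 <= INR d) by (apply (le_INR 1); auto).
  apply Rinv_0_lt_compat, Rmult_lt_0_compat; [apply Rmult_lt_0_compat|]; try apply pow_lt; lra.
Qed.

Lemma size_const_ge_0 d : 0 <= size_const d.
Proof.
  unfold size_const. pose proof (pos_INR (ell d)). pose proof (pos_INR d).
  assert (0 <= 2 ^ (d + 2)) by (apply pow_le; lra). lra.
Qed.

Theorem lemma8 (d : nat) (hd : (1 <= d)%nat) :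
  exists (c : R) (N : nat),
    forall n : nat, (N <= n)%nat ->
      (exists k, is_minimizer n k d) /\
      (forall k, is_minimizer n k d ->
         Rabs (redC n k d - main_term n d) <= c /\
         Rabs (INR k - main_term n d) <= c).
Proof.
  pose proof (upper_const_ge_0 d). pose proof (size_const_ge_0 d).
  destruct (Rpower2_dominates (lower_const d) 2 (upper_const d + 3)) as [T0 [HT0 Hgrowth]];
    [apply lower_const_pos; auto|lra|lra|].
  destruct (ceil_nat (64 * INR d ^ 2 + 16 * size_const d + 2 * T0 + 2)) as [p [Hp _]].
  { assert (0 <= INR d ^ 2) by (apply pow_le, pos_INR). lra. }
  exists (upper_const d + T0), (2 ^ p)%nat. intros n Hn.
  assert (hn : (1 <= n)%nat) by (pose proof (Nat.pow_le_mono_r 2 0 p); simpl in *; lia).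
  assert (HL : INR p <= log2R (INR n)).
  { rewrite <- log2R_pow2, <- INR_pow2. apply log2R_le, le_INR; auto.
    apply (lt_INR 0). apply Nat.neq_0_lt_0, Nat.pow_nonzero. lia. }
  assert (HL0 : 0 <= INR d ^ 2) by (apply pow_le, pos_INR).
  destruct (exists_good_k d n hd hn ltac:(lra) ltac:(lra)) as [k0 [Hk0 Hred0]].
  split; [exact (exists_minimizer n k0 d Hk0)|].
  intros k [Hk Hmin]. specialize (Hmin k0 Hk0).
  assert (Hlow : main_term n d - T0 < INR k).
  { destruct (Rle_lt_dec (INR k) (main_term n d - T0)) as [C|C]; auto.
    pose proof (redC_ge_small d n hd hn ltac:(lra) ltac:(lra) T0 ltac:(lra) HT0 Hgrowth k Hk C).
    lra. }
  pose proof (redC_ge_k n k d hd Hk).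
  split; apply Rabs_le; split; lra.
Qed.
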